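(* For every atom $X$, the set $[\![X]\!]$ is a closed set of the space $D_{\mathcal E}$: it satisfies Monotonicity, and for all terms $t,s$, atoms $Z,Y$, and $T_1,\dots,T_k$ each a term or an atom (with all displayed terms closed): if $t[x:=s]T_1\cdots T_k\in[\![X]\!]$ then $(\lambda x.t)sT_1\cdots T_k\in[\![X]\!]$, and if $t[Z:=Y]T_1\cdots T_k\in[\![X]\!]$ then $(\Lambda Z.t)YT_1\cdots T_k\in[\![X]\!]$.
   Context: Formulas $A ::= X\mid A\to B\mid\forall X.A$; terms $t ::= x\mid c^A\mid\lambda x.t\mid ts\mid\Lambda X.t\mid tX$ (a term-constant $c^A$ for each formula). Typing $\vdash s:A$ in $\mathbf{IL}_{\mathbf{at}}$ (natural deduction for $\to,\forall$ with $\forall$-elimination instantiating only atoms, and $c^A$ typed as axiom $\Gamma\vdash c^A:A$). $\beta$-reduction: $(\lambda x.t)s\to_\beta t[x:=s]$, $(\Lambda X.t)Y\to_\beta t[X:=Y]$ in any subterm position; normal = no redex; $\twoheadrightarrow$ reflexive-transitive closure. A term is closed if it has no free term-variable. The space $D_{\mathcal E}$: monoid $\mathcal E=\{\emptyset\}$ (one element, the empty sequent), domain $B_{\mathcal E}=\{(\emptyset\rhd t)\mid t\text{ closed}\}$, identified with the set of closed terms; a closed set is a subset satisfying Monotonicity ($(\emptyset\rhd t)\in\alpha\Rightarrow(\emptyset\cdot\emptyset\rhd t)\in\alpha$, trivial) and the two Expansion conditions stated in the claim. $[\![A]\!]$ is the set of closed terms $t$ with $t\twoheadrightarrow s$ for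 some normal $s$ such that $\vdash s:A$ is derivable. *)

From Stdlib Require Import Arith List Relations.
Import ListNotations.

Inductive form : Type :=
| FVar : nat -> form
| Imp : form -> form -> form
| All : form -> form.

Fixpoint fshift (c : nat) (A : form) : form :=
  match A with
  | FVar n => if n <? c then FVar n else FVar (S n)
  | Imp A B => Imp (fshift c A) (fshift c B)
  | All A => All (fshift (S c) A)
  end.

Fixpoint fsubst (k : nat) (u : form) (A : form) : form :=
  match A with
  | FVar n => if n =? k then u else if k <? n then FVar (pred n) else FVar n
  | Imp A B => Imp (fsubst k u A) (fsubst k u B)
  | All A => All (fsubst (S k) (fshift 0 u) A)
  end.

Inductive term : Type :=
| Var : nat -> term
| Cst : form -> term
| Lam : term -> term
| App : term -> term -> term
| TLam : term -> term
| TApp : term -> nat -> term.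

Fixpoint tm_shift (c : nat) (t : term) : term :=
  match t with
  | Var n => if n <? c then Var n else Var (S n)
  | Cst A => Cst A
  | Lam t => Lam (tm_shift (S c) t)
  | App t s => App (tm_shift c t) (tm_shift c s)
  | TLam t => TLam (tm_shift c t)
  | TApp t Y => TApp (tm_shift c t) Y
  end.

Fixpoint ty_shift (c : nat) (t : term) : term :=
  match t with
  | Var n => Var n
  | Cst A => Cst (fshift c A)
  | Lam t => Lam (ty_shift c t)
  | App t s => App (ty_shift c t) (ty_shift c s)
  | TLam t => TLam (ty_shift (S c) t)
  | TApp t Y => TApp (ty_shift c t) (if Y <? c then Y else S Y)
  end.

Fixpoint subst (k : nat) (s : term) (t : term) : term :=
  match t with
  | Var n => if n =? k then s else if k <? n then Var (pred n) else Var n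
  | Cst A => Cst A
  | Lam t => Lam (subst (S k) (tm_shift 0 s) t)
  | App t1 t2 => App (subst k s t1) (subst k s t2)
  | TLam t => TLam (subst k (ty_shift 0 s) t)
  | TApp t Y => TApp (subst k s t) Y
  end.

Fixpoint tsubst (k : nat) (Y : nat) (t : term) : term :=
  match t with
  | Var n => Var n
  | Cst A => Cst (fsubst k (FVar Y) A)
  | Lam t => Lam (tsubst k Y t)
  | App t1 t2 => App (tsubst k Y t1) (tsubst k Y t2)
  | TLam t => TLam (tsubst (S k) (S Y) t)
  | TApp t n => TApp (tsubst k Y t)
                     (if n =? k then Y else if k <? n then pred n else n)
  end.

Inductive step : term -> term -> Prop :=
| st_beta : forall t s, step (App (Lam t) s) (subst 0 s t)
| st_tbeta : forall t Y, step (TApp (TLam t) Y) (tsubst 0 Y t)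
| st_lam : forall t t', step t t' -> step (Lam t) (Lam t')
| st_appl : forall t t' s, step t t' -> step (App t s) (App t' s)
| st_appr : forall t s s', step s s' -> step (App t s) (App t s')
| st_tlam : forall t t', step t t' -> step (TLam t) (TLam t')
| st_tapp : forall t t' Y, step t t' -> step (TApp t Y) (TApp t' Y).

Definition red : term -> term -> Prop := clos_refl_trans term step.

Definition normal (t : term) : Prop := forall u, ~ step t u.

(* no free term variable (free atoms allowed) *)
Fixpoint closed_at (k : nat) (t : term) : Prop :=
  match t with
  | Var n => n < k
  | Cst _ => True
  | Lam t => closed_at (S k) t
  | App t s => closed_at k t /\ closed_at k s
  | TLam t => closed_at k t
  | TApp t _ => closed_at k t
  end.

Definition closed (t : term) : Prop := closed_at 0 t.

Inductive typing : list form -> term -> form -> Prop :=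
| ty_var : forall G n A, nth_error G n = Some A -> typing G (Var n) A
| ty_cst : forall G A, typing G (Cst A) A
| ty_lam : forall G t A B, typing (A :: G) t B -> typing G (Lam t) (Imp A B)
| ty_app : forall G t s A B,
    typing G t (Imp A B) -> typing G s A -> typing G (App t s) B
| ty_tlam : forall G t A,
    typing (map (fshift 0) G) t A -> typing G (TLam t) (All A)
| ty_tapp : forall G t A Y,
    typing G t (All A) -> typing G (TApp t Y) (fsubst 0 (FVar Y) A).

Definition den (A : form) (t : term) : Prop :=
  closed t /\ exists s, red t s /\ normal s /\ typing nil s A.

Inductive arg : Type :=
| ATm : term -> arg
| ATy : nat -> arg.

Fixpoint spine (t : term) (l : list arg) : term :=
  match l with
  | nil => t
  | ATm u :: r => spine (App t u) r
  | ATy Y :: r => spine (TApp t Y) r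
  end.

(* closed sets of D_E (E = {empty}, elements identified with closed terms) *)
Definition closed_set (alpha : term -> Prop) : Prop :=
  (forall t, alpha t -> closed t) /\
  (* Monotonicity: (∅ ▷ t) ∈ α ⇒ (∅·∅ ▷ t) ∈ α, with ∅·∅ = ∅ *)
  (forall t, alpha t -> alpha t) /\
  (forall t s l, closed (spine (App (Lam t) s) l) ->
     alpha (spine (subst 0 s t) l) -> alpha (spine (App (Lam t) s) l)) /\
  (forall t Y l, closed (spine (TApp (TLam t) Y) l) ->
     alpha (spine (tsubst 0 Y t) l) -> alpha (spine (TApp (TLam t) Y) l)).

From Stdlib Require Import Relations.

(* [[A]] is closed under expansion: contracting the head redex first and then
   following the given reduction reaches the same typed normal form. *)

Lemma spine_step (l : list arg) : forall u u', step u u' -> step (spine u l) (spine u' l).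
Proof.
  induction l as [|[s|Y] l IH]; intros u u' Huu'; simpl.
  - exact Huu'.
  - apply IH, st_appl, Huu'.
  - apply IH, st_tapp, Huu'.
Qed.

Lemma den_closed (A : form) (t : term) : den A t -> closed t.
Proof. intros [Ht _]; exact Ht. Qed.

Lemma den_expand (A : form) (t t' : term) :
  closed t -> step t t' -> den A t' -> den A t.
Proof.
  intros Ht Htt' [_ [v [Hrv Hv]]].
  split; [exact Ht|].
  exists v; split; [|exact Hv].
  apply rt_trans with t'; [apply rt_step, Htt'|exact Hrv].
Qed.

Lemma closed_set_den (A : form) : closed_set (den A).
Proof.
  split; [|split; [|split]].
  - apply den_closed.
  - auto.
  - intros t s l Hc; apply den_expand; [exact Hc|apply spine_step, st_beta].
  - intros t Y l Hc; apply den_expand; [exact Hc|apply spine_step, st_tbeta].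
Qed.

Theorem mainTheorem6 : forall X : nat, closed_set (den (FVar X)).
Proof.
  intro X; apply closed_set_den.
Qed.
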